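(* Let $Q:(-\infty,-1)\to(-\infty,0)$ be the inverse of the strictly increasing function $G\mapsto G-e^G$ on $(-\infty,0)$, and define $R:\mathbb{R}\to\mathbb{R}$ by $R(V)=-2(1-e^{Q(V)})^2$ for $V<-1$ and $R(V)=4(V+1)$ for $V\ge -1$. Fix $m<-1$. For $n\in\mathbb{R}$ let $V(t;n)$ denote the unique solution of $V''+3V'=R(V)$, $t>0$, $V(0)=m$, $V'(0)=n$ (prime denoting $d/dt$, $V_t=dV/dt$). Define $\beta^-=\{n\in\mathbb{R}: \text{there exists } t>0 \text{ with } V_t(t;n)<0\}$ and $\beta^+=\{n\in\mathbb{R}: V_t(t;n)>0 \text{ for all } t\ge 0 \text{ and } V(t;n)>-1 \text{ for some } t>0\}$. Then $\beta^+$ and $\beta^-$ are both open and nonempty subsets of $\mathbb{R}$. *)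

From Stdlib Require Import Reals ClassicalEpsilon.
From Coquelicot Require Import Coquelicot.
Open Scope R_scope.

(* Q : (-oo,-1) -> (-oo,0), the inverse of G |-> G - e^G on (-oo,0).
   For v < -1 there is exactly one G < 0 with G - exp G = v;
   Q v is that G (its value for v >= -1 is irrelevant). *)
Definition Q (v : R) : R :=
  epsilon (inhabits 0) (fun G => G < 0 /\ G - exp G = v).

Definition Rf (v : R) : R :=
  if Rlt_dec v (-1) then -2 * (1 - exp (Q v)) ^ 2 else 4 * (v + 1).

(* V n t = V(t;n), Vt n t = V_t(t;n): for every n, (V n) solves
   V'' + 3 V' = R(V) for t > 0, with V(0) = m, V_t(0) = n, where V and V_t
   are continuous from the right at t = 0. *)
Definition is_solution_family (m : R) (V Vt : R -> R -> R) : Prop :=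
  forall n : R,
    V n 0 = m /\ Vt n 0 = n /\
    filterlim (V n) (at_right 0) (locally m) /\
    filterlim (Vt n) (at_right 0) (locally n) /\
    (forall t, 0 < t -> is_derive (V n) t (Vt n t)) /\
    (forall t, 0 < t -> is_derive (Vt n) t (Rf (V n t) - 3 * Vt n t)).

Definition beta_minus (Vt : R -> R -> R) (n : R) : Prop :=
  exists t, 0 < t /\ Vt n t < 0.

Definition beta_plus (V Vt : R -> R -> R) (n : R) : Prop :=
  (forall t, 0 <= t -> 0 < Vt n t) /\ (exists t, 0 < t /\ -1 < V n t).

(* Writing W = V + 1, the equation reads (D - 1)(D + 4) W = Rf(V) - 4 (V + 1),
   and the right-hand side is nonnegative. Hence e^(-t) (W' + 4 W) and
   e^(4 t) (W' - W) are nondecreasing, and 5 W' is the sum of the first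
   combination and four times the second. So once V > -1 and V' > 0 the slope
   stays positive forever, and for a large initial slope V' stays bounded away
   from 0, so V crosses -1. Rf is 4-Lipschitz, so by Gronwall's inequality
   solutions depend continuously on n, uniformly on compact time intervals,
   which makes both sets open. *)
From Stdlib Require Import Reals Lra Psatz ClassicalEpsilon.
From Coquelicot Require Import Coquelicot.
Open Scope R_scope.

Lemma exp_le_compat x y : x <= y -> exp x <= exp y.
Proof. intros [h|<-]; [left; apply exp_increasing, h|right; reflexivity]. Qed.

Lemma exp_opp_mult_cancel c t : exp (- c * t) * exp (c * t) = 1.
Proof. rewrite <- exp_plus, <- exp_0. f_equal. ring. Qed.

Lemma derive_nonneg_le (f df : R -> R) a b :
  (forall x, a <= x <= b -> is_derive f x (df x)) ->
  (forall x, a <= x <= b -> 0 <= df x) -> a <= b -> f a <= f b.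
Proof.
  intros hd hdf hab.
  destruct (MVT_gen f a b df) as [c [hc hfc]];
    rewrite ?Rmin_left, ?Rmax_right in * by lra.
  - intros x hx; apply hd; lra.
  - intros x hx; apply continuity_pt_filterlim.
    apply (ex_derive_continuous (K := R_AbsRing) (V := R_NormedModule)).
    exists (df x); apply hd, hx.
  - assert (0 <= df c) by (apply hdf; lra). nra.
Qed.

Definition right_continuous_0 (f : R -> R) : Prop :=
  filterlim f (at_right 0) (locally (f 0)).

Lemma at_right_0_interval (P : R -> Prop) :
  at_right 0 P -> exists d, 0 < d /\ forall t, 0 < t < d -> P t.
Proof.
  intros [d hd]. exists d. split; [apply cond_pos|].
  intros t ht. apply hd; [|lra]. change (Rabs (t - 0) < d). rewrite Rminus_0_r, Rabs_right; lra.
Qed.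

Lemma derive_nonneg_le_right_0 (f df : R -> R) :
  right_continuous_0 f ->
  (forall t, 0 < t -> is_derive f t (df t)) -> (forall t, 0 < t -> 0 <= df t) ->
  forall s t, 0 <= s <= t -> f s <= f t.
Proof.
  intros hf hd hdf.
  assert (hpos : forall s t, 0 < s <= t -> f s <= f t).
  { intros s t hst. apply (derive_nonneg_le f df); try lra;
      intros x hx; [apply hd|apply hdf]; lra. }
  intros s t [[hs|<-] hst]; [apply hpos; lra|].
  destruct hst as [ht|<-]; [|lra].
  apply (filterlim_le (F := at_right 0) f (fun _ => f t) (f 0) (f t)).
  - exists (mkposreal t ht). intros x hx hx0. apply hpos. split; [exact hx0|].
    change (Rabs (x - 0) < t) in hx. rewrite Rminus_0_r, Rabs_right in hx; lra.
  - exact hf.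
  - apply filterlim_const.
Qed.

Lemma right_continuous_0_of_continuous (f : R -> R) : continuous f 0 -> right_continuous_0 f.
Proof.
  intro hf. apply (filterlim_filter_le_1 f (F := locally 0)); [|exact hf].
  intros P [d hd]. exists d. intros y hy _. exact (hd y hy).
Qed.

Lemma right_continuous_0_plus (f g : R -> R) :
  right_continuous_0 f -> right_continuous_0 g -> right_continuous_0 (fun t => f t + g t).
Proof.
  intros hf hg. eapply filterlim_comp_2; [exact hf|exact hg|].
  apply (filterlim_plus (V := R_NormedModule)).
Qed.

Lemma right_continuous_0_mult (f g : R -> R) :
  right_continuous_0 f -> right_continuous_0 g -> right_continuous_0 (fun t => f t * g t).
Proof.
  intros hf hg. eapply filterlim_comp_2; [exact hf|exact hg|].
  apply (filterlim_mult (K := R_AbsRing)).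
Qed.

Lemma right_continuous_0_opp (f : R -> R) :
  right_continuous_0 f -> right_continuous_0 (fun t => - f t).
Proof.
  intro hf. eapply filterlim_comp; [exact hf|].
  apply (filterlim_opp (V := R_NormedModule)).
Qed.

Lemma right_continuous_0_minus (f g : R -> R) :
  right_continuous_0 f -> right_continuous_0 g -> right_continuous_0 (fun t => f t - g t).
Proof.
  intros hf hg. apply right_continuous_0_plus; [exact hf|apply right_continuous_0_opp, hg].
Qed.

Lemma right_continuous_0_const (c : R) : right_continuous_0 (fun _ => c).
Proof. apply filterlim_const. Qed.

Lemma right_continuous_0_pow (f : R -> R) k :
  right_continuous_0 f -> right_continuous_0 (fun t => f t ^ k).
Proof.
  intro hf. induction k as [|k IH]; [apply right_continuous_0_const|].
  apply right_continuous_0_mult; assumption.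
Qed.

Lemma right_continuous_0_exp_scal (c : R) : right_continuous_0 (fun t => exp (c * t)).
Proof.
  apply right_continuous_0_of_continuous.
  apply (ex_derive_continuous (K := R_AbsRing) (V := R_NormedModule)). auto_derive; auto.
Qed.

Lemma is_derive_mult_exp (f : R -> R) df c t :
  is_derive f t df ->
  is_derive (fun s => f s * exp (c * s)) t ((df + c * f t) * exp (c * t)).
Proof.
  intro hf. auto_derive; [exists df; exact hf|].
  replace (Derive (fun x => f x) t) with df by (symmetry; now apply is_derive_unique).
  ring.
Qed.

Lemma gronwall_right_0 (E dE : R -> R) k :
  right_continuous_0 E ->
  (forall t, 0 < t -> is_derive E t (dE t)) -> (forall t, 0 < t -> dE t <= k * E t) ->
  forall t, 0 <= t -> E t <= E 0 * exp (k * t).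
Proof.
  intros hE hd hdE t ht.
  assert (hmono := derive_nonneg_le_right_0 (fun s => - (E s * exp (- k * s)))
    (fun s => - ((dE s + - k * E s) * exp (- k * s)))).
  assert (hdecay : E t * exp (- k * t) <= E 0).
  { enough (- (E 0 * exp (- k * 0)) <= - (E t * exp (- k * t)))
      by (rewrite Rmult_0_r, exp_0 in *; lra).
    apply hmono; [| |intros s hs|lra].
    - apply right_continuous_0_opp, right_continuous_0_mult;
        [exact hE|apply right_continuous_0_exp_scal].
    - intros s hs. apply (is_derive_opp (fun s => E s * exp (- k * s))).
      apply is_derive_mult_exp, hd, hs.
    - pose proof (hdE s hs). pose proof (exp_pos (- k * s)). nra. }
  replace (E t) with (E t * exp (- k * t) * exp (k * t))
    by (rewrite Rmult_assoc, exp_opp_mult_cancel; ring).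
  apply Rmult_le_compat_r; [left; apply exp_pos|exact hdecay].
Qed.

Lemma Q_spec v : v < -1 -> Q v < 0 /\ Q v - exp (Q v) = v.
Proof.
  intro hv. unfold Q. apply epsilon_spec.
  assert (hc : continuity (fun G => G - exp G)).
  { apply continuity_minus; apply derivable_continuous;
      [apply derivable_id|apply derivable_exp]. }
  pose proof (exp_pos v). assert (exp 0 = 1) by apply exp_0.
  destruct (IVT_gen (fun G => G - exp G) v 0 v hc) as [G [hG hGv]];
    rewrite ?Rmin_left, ?Rmax_right in * by lra; [lra|].
  exists G. split; [|exact hGv].
  destruct hG as [_ [hG|hG]]; [exact hG|subst G; lra].
Qed.

(* In the variable G = Q v the lower branch of Rf is -2 (1 - e^G)^2, and its
   slope 4 e^G (1 - e^G) is at most 4 (1 - e^G), the slope of 4 (G - e^G) = 4 v. *)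
Lemma lower_branch_increment G1 G2 : G1 <= G2 <= 0 ->
  0 <= -2 * (1 - exp G2) ^ 2 - -2 * (1 - exp G1) ^ 2 <=
       4 * ((G2 - exp G2) - (G1 - exp G1)).
Proof.
  intros hG.
  assert (hexp : forall x, x <= G2 -> 0 < exp x <= 1).
  { intros x hx. split; [apply exp_pos|]. rewrite <- exp_0. apply exp_le_compat; lra. }
  split.
  - enough (-2 * (1 - exp G1) ^ 2 <= -2 * (1 - exp G2) ^ 2) by lra.
    apply (derive_nonneg_le (fun G => -2 * (1 - exp G) ^ 2)
             (fun G => 4 * exp G * (1 - exp G))); [| |lra].
    + intros x _. auto_derive; [exact I|ring].
    + intros x hx. pose proof (hexp x ltac:(lra)). nra.
  - enough (4 * (G1 - exp G1) - -2 * (1 - exp G1) ^ 2 <=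
            4 * (G2 - exp G2) - -2 * (1 - exp G2) ^ 2) by lra.
    apply (derive_nonneg_le (fun G => 4 * (G - exp G) - -2 * (1 - exp G) ^ 2)
             (fun G => 4 * (1 - exp G) ^ 2)); [| |lra].
    + intros x _. auto_derive; [exact I|ring].
    + intros x _. apply Rmult_le_pos; [lra|apply pow2_ge_0].
Qed.

Lemma Rf_increment a b : a <= b -> 0 <= Rf b - Rf a <= 4 * (b - a).
Proof.
  intro hab. unfold Rf.
  destruct (Rlt_dec a (-1)) as [ha|ha]; destruct (Rlt_dec b (-1)) as [hb|hb]; [| |lra|lra].
  - destruct (Q_spec a ha) as [qa ea], (Q_spec b hb) as [qb eb].
    destruct (Rle_dec (Q a) (Q b)) as [hq|hq].
    + pose proof (lower_branch_increment (Q a) (Q b) ltac:(lra)). lra.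
    + pose proof (lower_branch_increment (Q b) (Q a) ltac:(lra)).
      assert (a = b) as <- by lra. lra.
  - destruct (Q_spec a ha) as [qa ea].
    pose proof (lower_branch_increment (Q a) 0 ltac:(lra)).
    rewrite exp_0 in *. lra.
Qed.

Lemma Rf_lipschitz a b : Rabs (Rf a - Rf b) <= 4 * Rabs (a - b).
Proof.
  destruct (Rle_dec a b) as [h|h].
  - pose proof (Rf_increment a b h).
    rewrite (Rabs_minus_sym a), (Rabs_minus_sym (Rf a)), !Rabs_right by lra. lra.
  - pose proof (Rf_increment b a ltac:(lra)). rewrite !Rabs_right by lra. lra.
Qed.

Lemma Rf_ge_linear v : 4 * (v + 1) <= Rf v.
Proof.
  destruct (Rle_dec (-1) v) as [hv|hv].
  - unfold Rf. destruct (Rlt_dec v (-1)); lra.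
  - pose proof (Rf_increment v (-1) ltac:(lra)).
    assert (Rf (-1) = 0) by (unfold Rf; destruct (Rlt_dec (-1) (-1)); lra). lra.
Qed.

Definition is_solution (v w : R -> R) : Prop :=
  right_continuous_0 v /\ right_continuous_0 w /\
  (forall t, 0 < t -> is_derive v t (w t)) /\
  (forall t, 0 < t -> is_derive w t (Rf (v t) - 3 * w t)).

Lemma solution_family_spec m V Vt n : is_solution_family m V Vt ->
  is_solution (V n) (Vt n) /\ V n 0 = m /\ Vt n 0 = n.
Proof.
  intro hV. destruct (hV n) as [h0 [h1 [hl0 [hl1 hd]]]].
  unfold is_solution, right_continuous_0. rewrite h0, h1. tauto.
Qed.

Section Solution.

Variables v w : R -> R.
Hypothesis sol : is_solution v w.

(* a and b are the roots 1 and -4 of x^2 + 3 x - 4: the combination below has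
   derivative e^(-a t) (Rf v - 4 (v + 1)) >= 0. *)
Lemma characteristic_combination_le a b : a + b = -3 -> a * b = -4 ->
  forall s t, 0 <= s <= t ->
  (w s - b * (v s + 1)) * exp (a * (t - s)) <= w t - b * (v t + 1).
Proof.
  intros hsum hprod s t hst. destruct sol as [hv0 [hw0 [hv hw]]].
  assert (hmono := derive_nonneg_le_right_0
    (fun s => (w s - b * (v s + 1)) * exp (- a * s))
    (fun s => ((Rf (v s) - 3 * w s - b * w s) + - a * (w s - b * (v s + 1))) * exp (- a * s))).
  enough (hle : (w s - b * (v s + 1)) * exp (- a * s) <= (w t - b * (v t + 1)) * exp (- a * t)).
  { replace (w t - b * (v t + 1)) with ((w t - b * (v t + 1)) * exp (- a * t) * exp (a * t))
      by (rewrite Rmult_assoc, exp_opp_mult_cancel; ring).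
    replace (exp (a * (t - s))) with (exp (- a * s) * exp (a * t))
      by (rewrite <- exp_plus; f_equal; ring).
    rewrite <- Rmult_assoc. apply Rmult_le_compat_r; [left; apply exp_pos|exact hle]. }
  apply hmono; [| |intros x hx|exact hst].
  - apply right_continuous_0_mult; [|apply right_continuous_0_exp_scal].
    apply right_continuous_0_minus; [exact hw0|].
    apply right_continuous_0_mult; [apply right_continuous_0_const|].
    apply right_continuous_0_plus; [exact hv0|apply right_continuous_0_const].
  - intros x hx. apply (is_derive_mult_exp (fun s => w s - b * (v s + 1))); cbv beta.
    auto_derive; [split; [exists (Rf (v x) - 3 * w x); apply hw, hx|];
                  split; [exists (w x); apply hv, hx|exact I]|].
    replace (Derive (fun x => w x) x) with (Rf (v x) - 3 * w x)
      by (symmetry; apply is_derive_unique, hw, hx).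
    replace (Derive (fun x => v x) x) with (w x)
      by (symmetry; apply is_derive_unique, hv, hx).
    ring.
  - replace (Rf (v x) - 3 * w x - b * w x + - a * (w x - b * (v x + 1)))
      with (Rf (v x) - 4 * (v x + 1) - (3 + a + b) * w x + (a * b + 4) * (v x + 1))
      by ring.
    rewrite hprod. replace (3 + a + b) with 0 by lra.
    pose proof (Rf_ge_linear (v x)). pose proof (exp_pos (- a * x)). nra.
Qed.

Lemma slope_lower_bound a t : 0 <= a <= t -> 0 <= w a + 4 * (v a + 1) ->
  Rmin (w a + 4 * (v a + 1)) (5 * w a) <= 5 * w t.
Proof.
  intros hat hPa.
  assert (hP := characteristic_combination_le 1 (-4) ltac:(lra) ltac:(lra) a t hat).
  assert (hN := characteristic_combination_le (-4) 1 ltac:(lra) ltac:(lra) a t hat).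
  assert (hgrow : 1 <= exp (1 * (t - a))).
  { rewrite <- exp_0 at 1. apply exp_le_compat. lra. }
  assert (hdecay : 0 < exp (-4 * (t - a)) <= 1).
  { split; [apply exp_pos|]. rewrite <- exp_0. apply exp_le_compat. lra. }
  assert (hPt : w a + 4 * (v a + 1) <= w t + 4 * (v t + 1)) by nra.
  assert (hNt : Rmin (w a - (v a + 1)) 0 <= w t - (v t + 1)).
  { apply Rmin_case_strong; intro hNa.
    - assert (w a - (v a + 1) <= (w a - (v a + 1)) * exp (-4 * (t - a))) by nra. lra.
    - assert (0 <= (w a - (v a + 1)) * exp (-4 * (t - a))) by nra. lra. }
  revert hNt. apply Rmin_case_strong; apply Rmin_case_strong; intros; lra.
Qed.

Lemma slope_positive_after a t : 0 <= a <= t -> -1 < v a -> 0 < w a -> 0 < w t.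
Proof.
  intros hat hva hwa.
  assert (h := slope_lower_bound a t hat ltac:(lra)).
  assert (0 < Rmin (w a + 4 * (v a + 1)) (5 * w a)) by (apply Rmin_glb_lt; lra).
  lra.
Qed.

End Solution.

Lemma positive_lower_bound (f : R -> R) T : 0 < T ->
  right_continuous_0 f -> (forall t, 0 < t <= T -> continuous f t) ->
  (forall t, 0 <= t <= T -> 0 < f t) ->
  exists mu, 0 < mu /\ forall t, 0 <= t <= T -> mu <= f t.
Proof.
  intros hT hf0 hf hpos.
  assert (h0 : 0 < f 0) by (apply hpos; lra).
  destruct (at_right_0_interval _ (hf0 _ (open_gt (f 0 / 2) (f 0) ltac:(lra))))
    as [d [hd hnear]].
  set (s := Rmin (d / 2) T).
  assert (hs : 0 < s <= T) by (split; [apply Rmin_glb_lt; lra|apply Rmin_r]).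
  destruct (continuity_ab_min f s T) as [x [hx hxs]]; [lra| |].
  { intros c hc. apply continuity_pt_filterlim, hf. lra. }
  exists (Rmin (f 0 / 2) (f x)). split.
  - apply Rmin_glb_lt; [lra|apply hpos; lra].
  - intros t ht. destruct (Rlt_dec t s) as [hts|hts].
    + destruct (Req_dec t 0) as [->|ht0]; [pose proof (Rmin_l (f 0 / 2) (f x)); lra|].
      assert (s <= d / 2) by apply Rmin_l.
      assert (f 0 / 2 < f t) by (apply hnear; lra).
      pose proof (Rmin_l (f 0 / 2) (f x)). lra.
    + pose proof (hx t ltac:(lra)). pose proof (Rmin_r (f 0 / 2) (f x)). lra.
Qed.

Lemma energy_rate_le W Z D : Rabs D <= 4 * Rabs W ->
  2 * W * Z + 2 * Z * (D - 3 * Z) <= 5 * (W ^ 2 + Z ^ 2).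
Proof.
  intro hD.
  assert (hZD : Z * D <= 4 * Rabs Z * Rabs W).
  { pose proof (Rle_abs (Z * D)). rewrite Rabs_mult in *.
    pose proof (Rabs_pos Z). nra. }
  pose proof (Rle_abs (W * Z)). rewrite Rabs_mult in *.
  pose proof (pow2_abs W). pose proof (pow2_abs Z).
  pose proof (pow2_ge_0 (Rabs W - Rabs Z)). nra.
Qed.

Lemma is_derive_sq_diff (f g : R -> R) df dg t :
  is_derive f t df -> is_derive g t dg ->
  is_derive (fun s => (f s - g s) ^ 2) t (2 * (f t - g t) * (df - dg)).
Proof.
  intros hf hg. auto_derive; [split; [exists df; exact hf|split; [exists dg; exact hg|exact I]]|].
  replace (Derive (fun x => f x) t) with df by (symmetry; now apply is_derive_unique).
  replace (Derive (fun x => g x) t) with dg by (symmetry; now apply is_derive_unique).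
  ring.
Qed.

Lemma solution_energy_gronwall v1 w1 v2 w2 :
  is_solution v1 w1 -> is_solution v2 w2 -> forall t, 0 <= t ->
  (v1 t - v2 t) ^ 2 + (w1 t - w2 t) ^ 2 <=
  ((v1 0 - v2 0) ^ 2 + (w1 0 - w2 0) ^ 2) * exp (5 * t).
Proof.
  intros [hv1 [hw1 [dv1 dw1]]] [hv2 [hw2 [dv2 dw2]]].
  apply (gronwall_right_0 (fun s => (v1 s - v2 s) ^ 2 + (w1 s - w2 s) ^ 2)
    (fun s => 2 * (v1 s - v2 s) * (w1 s - w2 s) +
              2 * (w1 s - w2 s) * ((Rf (v1 s) - 3 * w1 s) - (Rf (v2 s) - 3 * w2 s)))).
  - apply right_continuous_0_plus; apply right_continuous_0_pow;
      apply right_continuous_0_minus; assumption.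
  - intros t ht. apply (is_derive_plus (fun s => (v1 s - v2 s) ^ 2) (fun s => (w1 s - w2 s) ^ 2));
      apply is_derive_sq_diff; auto.
  - intros t _.
    replace ((Rf (v1 t) - 3 * w1 t) - (Rf (v2 t) - 3 * w2 t))
      with ((Rf (v1 t) - Rf (v2 t)) - 3 * (w1 t - w2 t)) by ring.
    apply energy_rate_le, Rf_lipschitz.
Qed.

Lemma abs_lt_of_sq_lt x e : 0 < e -> x ^ 2 < e ^ 2 -> Rabs x < e.
Proof.
  intros he hx. rewrite <- (Rabs_right e) by lra.
  apply Rsqr_lt_abs_0. unfold Rsqr. nra.
Qed.

Lemma solution_family_uniform_dependence m V Vt : is_solution_family m V Vt ->
  forall n T eps, 0 < eps -> exists delta, 0 < delta /\
  forall n' t, Rabs (n' - n) < delta -> 0 <= t <= T ->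
  Rabs (V n' t - V n t) < eps /\ Rabs (Vt n' t - Vt n t) < eps.
Proof.
  intros hV n T eps heps.
  set (delta := eps * exp (- (5 * T) / 2)).
  assert (hdelta : 0 < delta) by (apply Rmult_lt_0_compat; [lra|apply exp_pos]).
  exists delta. split; [exact hdelta|]. intros n' t hn ht.
  destruct (solution_family_spec m V Vt n hV) as [hsol [hv0 hw0]].
  destruct (solution_family_spec m V Vt n' hV) as [hsol' [hv0' hw0']].
  assert (hE := solution_energy_gronwall _ _ _ _ hsol' hsol t ltac:(lra)).
  rewrite hv0, hw0, hv0', hw0' in hE.
  assert (hscale : delta ^ 2 * exp (5 * T) = eps ^ 2).
  { unfold delta. replace ((eps * exp (- (5 * T) / 2)) ^ 2 * exp (5 * T))
      with (eps ^ 2 * (exp (- (5 * T) / 2) * exp (- (5 * T) / 2) * exp (5 * T))) by ring.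
    rewrite <- !exp_plus. replace (- (5 * T) / 2 + - (5 * T) / 2 + 5 * T) with 0 by field.
    rewrite exp_0. ring. }
  assert (hn2 : (n' - n) ^ 2 < delta ^ 2).
  { rewrite <- (pow2_abs (n' - n)). pose proof (Rabs_pos (n' - n)). nra. }
  assert (hT : exp (5 * t) <= exp (5 * T)) by (apply exp_le_compat; lra).
  pose proof (exp_pos (5 * t)).
  assert (hbound : ((m - m) ^ 2 + (n' - n) ^ 2) * exp (5 * t) < eps ^ 2).
  { replace (m - m) with 0 by ring. nra. }
  pose proof (pow2_ge_0 (V n' t - V n t)). pose proof (pow2_ge_0 (Vt n' t - Vt n t)).
  split; apply abs_lt_of_sq_lt; lra.
Qed.

Lemma beta_minus_nonempty m V Vt : is_solution_family m V Vt -> exists n, beta_minus Vt n.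
Proof.
  intro hV. exists (-1).
  destruct (solution_family_spec m V Vt (-1) hV) as [[_ [hw0 _]] [_ hw]].
  assert (hneg : Vt (-1) 0 < 0) by lra.
  destruct (at_right_0_interval _ (hw0 _ (open_lt 0 _ hneg))) as [d [hd hnear]].
  exists (d / 2). split; [lra|apply hnear; lra].
Qed.

Lemma beta_minus_open m V Vt : is_solution_family m V Vt -> open (beta_minus Vt).
Proof.
  intros hV n [t0 [ht0 hneg]].
  destruct (solution_family_uniform_dependence m V Vt hV n t0 (- Vt n t0) ltac:(lra))
    as [delta [hdelta hclose]].
  exists (mkposreal delta hdelta). intros n' hn'.
  exists t0. split; [exact ht0|].
  destruct (hclose n' t0 hn' ltac:(lra)) as [_ h].
  pose proof (Rle_abs (Vt n' t0 - Vt n t0)). lra.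
Qed.

Lemma beta_plus_nonempty m V Vt : m < -1 -> is_solution_family m V Vt ->
  exists n, beta_plus V Vt n.
Proof.
  intros hm hV. set (n := 1 - 4 * (m + 1)). exists n.
  destruct (solution_family_spec m V Vt n hV) as [hsol [hv0 hw0]].
  assert (hslope : forall t, 0 <= t -> 1 / 5 <= Vt n t).
  { intros t ht.
    assert (h := slope_lower_bound _ _ hsol 0 t ltac:(lra) ltac:(rewrite hv0, hw0; unfold n; lra)).
    rewrite hv0, hw0, Rmin_left in h by (unfold n; lra).
    replace (n + 4 * (m + 1)) with 1 in h by (unfold n; ring). lra. }
  split; [intros t ht; pose proof (hslope t ht); lra|].
  set (t := 5 - 5 * (m + 1)). exists t. split; [unfold t; lra|].
  destruct hsol as [hv0r [_ [hv _]]].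
  enough (V n 0 - 1 / 5 * 0 <= V n t - 1 / 5 * t) by (rewrite hv0 in *; unfold t in *; lra).
  apply (derive_nonneg_le_right_0 (fun s => V n s - 1 / 5 * s) (fun s => Vt n s - 1 / 5));
    [| |intros s hs; pose proof (hslope s ltac:(lra)); lra|unfold t; lra].
  - apply right_continuous_0_minus; [exact hv0r|].
    apply right_continuous_0_mult; [apply right_continuous_0_const|].
    apply right_continuous_0_of_continuous, continuous_id.
  - intros s hs. apply (is_derive_minus (V n) (fun s => 1 / 5 * s)); [apply hv, hs|].
    auto_derive; [exact I|ring].
Qed.

Lemma beta_plus_open m V Vt : is_solution_family m V Vt -> open (beta_plus V Vt).
Proof.
  intros hV n [hpos [t1 [ht1 hv1]]].
  destruct (solution_family_spec m V Vt n hV) as [[_ [hw0 [_ hw]]] _].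
  destruct (positive_lower_bound (Vt n) t1 ht1 hw0) as [mu [hmu hlow]];
    [|intros t ht; apply hpos; lra|].
  { intros t ht. apply (ex_derive_continuous (K := R_AbsRing) (V := R_NormedModule)).
    exists (Rf (V n t) - 3 * Vt n t). apply hw. lra. }
  set (eps := Rmin mu (V n t1 + 1)).
  assert (heps : 0 < eps) by (apply Rmin_glb_lt; lra).
  assert (heps1 : eps <= mu) by apply Rmin_l.
  assert (heps2 : eps <= V n t1 + 1) by apply Rmin_r.
  destruct (solution_family_uniform_dependence m V Vt hV n t1 eps heps) as [delta [hdelta hclose]].
  exists (mkposreal delta hdelta). intros n' hn'.
  destruct (solution_family_spec m V Vt n' hV) as [hsol' _].
  assert (hslope : forall t, 0 <= t <= t1 -> 0 < Vt n' t).
  { intros t ht. destruct (hclose n' t hn' ht) as [_ h].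
    pose proof (hlow t ht). pose proof (Rle_abs (Vt n t - Vt n' t)).
    rewrite Rabs_minus_sym in h. lra. }
  assert (hv1' : -1 < V n' t1).
  { destruct (hclose n' t1 hn' ltac:(lra)) as [h _].
    pose proof (Rle_abs (V n t1 - V n' t1)). rewrite Rabs_minus_sym in h. lra. }
  split; [|exists t1; split; assumption].
  intros t ht. destruct (Rle_dec t t1) as [hle|hgt]; [apply hslope; lra|].
  apply (slope_positive_after _ _ hsol' t1 t); [lra|exact hv1'|apply hslope; lra].
Qed.

Theorem lemma4p2 (m : R) (hm : m < -1) (V Vt : R -> R -> R)
  (hV : is_solution_family m V Vt) :
  open (beta_plus V Vt) /\ (exists n, beta_plus V Vt n) /\
  open (beta_minus Vt) /\ (exists n, beta_minus Vt n).
Proof.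
  split; [exact (beta_plus_open m V Vt hV)|].
  split; [exact (beta_plus_nonempty m V Vt hm hV)|].
  split; [exact (beta_minus_open m V Vt hV)|exact (beta_minus_nonempty m V Vt hV)].
Qed.
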